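(* Given a neural network $f$ and an input $\mathbf{x} = \langle x_1, \ldots, x_m \rangle$ where $m \geq 2$, the time complexity of $\textsc{qXp}(\emptyset, \emptyset, \mathbf{x})$ is $\lfloor \log_2 m \rfloor + 1$ calls of $\textsc{checkValid}$ for the best case (all features are irrelevant) and $(m-1) \times 2$ calls of $\textsc{checkValid}$ for the worst case (all features are in explanation). When $m = 1$, it needs $1$ $\textsc{checkValid}$ call.
   Context: $f$ is a neural network (classifier or regressor), $\mathbf{x}$ an input with $m$ features, $\epsilon$ a perturbation magnitude and $p$ a norm. The oracle $\textsc{checkValid}(f, \mathbf{x}, \mathbf{x}_S)$ returns True iff every input obtained from $\mathbf{x}$ by perturbing the features in $\mathbf{x}_S$ within $\epsilon$ (in $p$-norm) while keeping all other features fixed yields the same prediction as $\mathbf{x}$ (same class, or output within $\delta$ for regression); such features are irrelevant, the others form the explanation. The recursive function $\textsc{qXp}(\mathbf{x}_\alpha, \mathbf{x}_\beta, \mathbf{x}_\Theta)$ (current explanation, current irrelevant set, features still to analyze) returns a pair (explanation features, irrelevant set) and does: if $|\mathbf{x}_\Theta|=1$, return $(\emptyset, \mathbf{x}_\beta\cup\mathbf{x}_\Theta)$ if $\textsc{checkValid}(f,\mathbf{x},\mathbf{x}_\beta\cup\mathbf{x}_\Theta)$ is True, else $(\mathbf{x}_\Theta,\mathbf{x}_\beta)$. Otherwise split $\mathbf{x}_\Theta$ into halves $\mathbf{x}_\Phi,\mathbf{x}_\Psi$ (with $|\mathbf{x}_\Phi|=|\mathbf{x}_\Psi|+1$ when odd).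 If $\textsc{checkValid}(f,\mathbf{x},\mathbf{x}_\beta\cup\mathbf{x}_\Phi)$ is True, return $\textsc{qXp}(\mathbf{x}_\alpha,\mathbf{x}_\beta\cup\mathbf{x}_\Phi,\mathbf{x}_\Psi)$; else if $\textsc{checkValid}(f,\mathbf{x},\mathbf{x}_\beta\cup\mathbf{x}_\Psi)$ is True, return $\textsc{qXp}(\mathbf{x}_\alpha,\mathbf{x}_\beta\cup\mathbf{x}_\Psi,\mathbf{x}_\Phi)$; else: if $|\mathbf{x}_\Phi|=1$ set $(\mathbf{x}_\Phi',\mathbf{x}_\beta')=(\mathbf{x}_\Phi,\mathbf{x}_\beta)$, otherwise $(\mathbf{x}_\Phi',\mathbf{x}_\beta')=\textsc{qXp}(\mathbf{x}_\alpha\cup\mathbf{x}_\Psi,\mathbf{x}_\beta,\mathbf{x}_\Phi)$; if $|\mathbf{x}_\Psi|=1$ set $(\mathbf{x}_\Psi',\mathbf{x}_\beta'')=(\mathbf{x}_\Psi,\mathbf{x}_\beta')$, otherwise $(\mathbf{x}_\Psi',\mathbf{x}_\beta'')=\textsc{qXp}(\mathbf{x}_\alpha\cup\mathbf{x}_\Phi',\mathbf{x}_\beta',\mathbf{x}_\Psi)$; return $(\mathbf{x}_\Phi'\cup\mathbf{x}_\Psi',\mathbf{x}_\beta'')$. *)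

From mathcomp Require Import all_boot all_order all_algebra.
Set Implicit Arguments. Unset Strict Implicit. Unset Printing Implicit Defensive.
Import Order.TTheory GRing.Theory Num.Theory.
Local Open Scope ring_scope.

(* checkValid f x S : every input x' obtained from x by perturbing only the
   features in S (all other features fixed) with ||x' - x|| <= eps yields the
   same prediction as x.  [nrm] is the chosen p-norm (kept abstract: any
   function works) and [same] is the prediction-equivalence relation
   (equal class for classifiers, |y - y'| <= delta for regressors). *)
Definition checkValid (R : realFieldType) (Y : Type) (m : nat)
  (same : Y -> Y -> Prop) (nrm : ('I_m -> R) -> R) (eps : R)
  (f : ('I_m -> R) -> Y) (x : 'I_m -> R) (S : seq 'I_m) : Prop :=
  forall x' : 'I_m -> R,
    (forall i, i \notin S -> x' i = x i) ->
    nrm (fun i => x' i - x i) <= eps ->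
    same (f x') (f x).

(* The recursive procedure qXp, instrumented to count calls to the oracle
   [cv] (the boolean checkValid).  Feature sets are sequences; union is
   concatenation; x_Phi is the first ceil(n/2) features of x_Theta.
   Result: ((explanation, irrelevant set), number of checkValid calls).
   [fuel] only ensures termination; [qXp] supplies fuel = size Theta, which
   is always sufficient since both halves are strictly smaller. *)
Fixpoint qXp_fuel (T : Type) (cv : seq T -> bool) (fuel : nat)
  (a b t : seq T) : (seq T * seq T) * nat :=
  match fuel with
  | 0 => ((t, b), 0%N)
  | fuel'.+1 =>
    if size t == 1%N then
      (if cv (b ++ t) then (([::], b ++ t), 1%N) else ((t, b), 1%N))
    else
      let phi := take (uphalf (size t)) t in
      let psi := drop (uphalf (size t)) t in
      if cv (b ++ phi) then
        let r := qXp_fuel cv fuel' a (b ++ phi) psi in (r.1, (r.2 + 1)%N)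
      else if cv (b ++ psi) then
        let r := qXp_fuel cv fuel' a (b ++ psi) phi in (r.1, (r.2 + 2)%N)
      else
        let r1 := if size phi == 1%N then ((phi, b), 0%N)
                  else qXp_fuel cv fuel' (a ++ psi) b phi in
        let phi' := r1.1.1 in let b' := r1.1.2 in
        let r2 := if size psi == 1%N then ((psi, b'), 0%N)
                  else qXp_fuel cv fuel' (a ++ phi') b' psi in
        let psi' := r2.1.1 in let b'' := r2.1.2 in
        ((phi' ++ psi', b''), (r1.2 + r2.2 + 2)%N)
  end.

Definition qXp (T : Type) (cv : seq T -> bool) (a b t : seq T) :=
  qXp_fuel cv (size t) a b t.

Definition qXp_calls (m : nat) (cv : seq 'I_m -> bool) : nat :=
  (qXp cv [::] [::] (enum 'I_m)).2.

(* qXp halves the features still to analyse at every call.  When every set is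
   irrelevant, the first check succeeds, so each level costs one call and only
   the second half is explored: floor(log2 m) + 1 calls.  When no nonempty set
   is irrelevant, both checks fail at every internal node of the recursion
   tree, which is a binary tree with m leaves (the leaves themselves cost
   nothing), hence m - 1 internal nodes and 2(m - 1) calls. *)
From mathcomp Require Import all_boot all_order all_algebra.
From mathcomp Require Import zify.
Import Order.TTheory GRing.Theory Num.Theory.
Local Open Scope ring_scope.

Lemma uphalf_add_half (n : nat) : (uphalf n + n./2 = n)%N.
Proof. by rewrite uphalf_half -addnA addnn odd_double_half. Qed.

Lemma half_le_uphalf (n : nat) : (n./2 <= uphalf n)%N.
Proof. by rewrite uphalf_half leq_addl. Qed.

Section HalfSplit.

Context {T : Type} (t : seq T).

Lemma size_take_uphalf : size (take (uphalf (size t)) t) = uphalf (size t).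
Proof. by rewrite size_takel // -{2}(uphalf_add_half (size t)) leq_addr. Qed.

Lemma size_drop_uphalf : size (drop (uphalf (size t)) t) = (size t)./2.
Proof. by rewrite size_drop -{1}(uphalf_add_half (size t)) addKn. Qed.

End HalfSplit.

Section CallCount.

Variables (T : Type) (cv : seq T -> bool).

Lemma qXp_fuel_calls_singleton (fuel : nat) (a b t : seq T) :
  size t = 1%N -> (0 < fuel)%N -> (qXp_fuel cv fuel a b t).2 = 1%N.
Proof. by case: fuel => // fuel /= ->; case: (cv _). Qed.

Lemma qXp_fuel_calls_all_valid (fuel : nat) (a b t : seq T) :
  (forall S, cv S) -> (0 < size t <= fuel)%N ->
  (qXp_fuel cv fuel a b t).2 = (trunc_log 2 (size t) + 1)%N.
Proof.
move=> cvT; elim: fuel a b t => [|fuel IH] a b t /andP[t_gt0 t_le]; first lia.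
have [t1|t_neq1] := eqVneq (size t) 1%N.
  by rewrite qXp_fuel_calls_singleton // t1 trunc_log1.
have t_gt1 : (1 < size t)%N by lia.
have h_gt0 : (0 < (size t)./2)%N by rewrite half_gt0.
have split_t := uphalf_add_half (size t).
rewrite /= (negbTE t_neq1) cvT /= IH size_drop_uphalf ?(trunc_log2S t_gt1) //.
  by rewrite !addn1.
by rewrite h_gt0 /=; lia.
Qed.

Lemma qXp_fuel_calls_none_valid (fuel : nat) (a b t : seq T) :
  (forall S, (0 < size S)%N -> ~~ cv S) -> (1 < size t <= fuel)%N ->
  (qXp_fuel cv fuel a b t).2 = ((size t - 1) * 2)%N.
Proof.
move=> cvF; elim: fuel a b t => [|fuel IH] a b t /andP[t_gt1 t_le]; first lia.
have h_gt0 : (0 < (size t)./2)%N by rewrite half_gt0.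
have h_le_u := half_le_uphalf (size t).
have split_t := uphalf_add_half (size t).
have subcall s a' b' : (0 < size s <= fuel)%N ->
    (if size s == 1%N then ((s, b'), 0%N) else qXp_fuel cv fuel a' b' s).2
    = ((size s - 1) * 2)%N.
  move=> /andP[s_gt0 s_le]; have [->//|s_neq1] := eqVneq (size s) 1%N.
  by rewrite IH //; apply/andP; split; lia.
have cvF_cat s : (0 < size s)%N -> cv (b ++ s) = false.
  by move=> s_gt0; apply/negbTE/cvF; rewrite size_cat; lia.
rewrite /= ifN_eq; last lia.
have := size_take_uphalf t; have := size_drop_uphalf t.
set phi := take _ t; set psi := drop _ t => size_psi size_phi.
rewrite !cvF_cat /= ?subcall; rewrite ?size_phi ?size_psi //; lia.
Qed.

End CallCount.

Lemma checkValid_subset {R : realFieldType} {Y : Type} {m : nat}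
    {same : Y -> Y -> Prop} {nrm : ('I_m -> R) -> R} {eps : R}
    {f : ('I_m -> R) -> Y} {x : 'I_m -> R} {S S' : seq 'I_m} :
  {subset S <= S'} -> checkValid same nrm eps f x S' ->
  checkValid same nrm eps f x S.
Proof.
move=> sub_SS' valid_S' x' fixed_out_S; apply: valid_S' => i i_notin_S'.
by apply: fixed_out_S; apply: contra i_notin_S'; apply: sub_SS'.
Qed.

Theorem theorem2 (R : realFieldType) (Y : Type) (same : Y -> Y -> Prop)
  (m : nat) (nrm : ('I_m -> R) -> R) (eps : R)
  (f : ('I_m -> R) -> Y) (x : 'I_m -> R) (cv : seq 'I_m -> bool)
  (cvP : forall S : seq 'I_m, cv S = true <-> checkValid same nrm eps f x S) :
  [/\ (2 <= m)%N ->
        checkValid same nrm eps f x (enum 'I_m) ->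
        qXp_calls cv = (trunc_log 2 m + 1)%N,
      (2 <= m)%N ->
        (forall i : 'I_m, ~ checkValid same nrm eps f x [:: i]) ->
        qXp_calls cv = ((m - 1) * 2)%N
    & m = 1%N -> qXp_calls cv = 1%N].
Proof.
rewrite /qXp_calls /qXp; split => [m_ge2 valid_all|m_ge2 invalid1|m1].
- rewrite qXp_fuel_calls_all_valid ?size_enum_ord //; last lia.
  by move=> S; apply/cvP/(checkValid_subset _ valid_all) => i; rewrite mem_enum.
- rewrite qXp_fuel_calls_none_valid ?size_enum_ord //; last lia.
  case=> // i S _; apply/negP => /cvP valid_iS; apply: (invalid1 i).
  by apply: checkValid_subset valid_iS => j; rewrite inE => /eqP->; exact: mem_head.
- by rewrite qXp_fuel_calls_singleton ?size_enum_ord ?m1.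
Qed.
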